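(* For $x>0$ and $v>0$, the function \[ \int_1^v\frac{e^{2\pi itx}}{t}(\log t+2\gamma)\,dt-\Big[\tfrac12\log^2\tfrac1x+\Big(\gamma-\log2\pi+\frac{i\pi}{2}\Big)\log\tfrac1x+\varepsilon_0(x,v)\Big] \] is independent of $v$ and, as a function of $x$, belongs to $\mathcal F$, where \[ \varepsilon_0(x,v)=-\int_v^\infty\frac{e^{2\pi itx}}{t}(\log t+2\gamma)\,dt. \]
   Context: $\gamma$ is Euler's constant. $\mathcal F$ is the set of continuous functions $f:\,]0,\infty[\to\mathbb C$ such that both $f(x)$ and $x\overline{f(1/x)}$ extend continuously to $x=0$. The integral defining $\varepsilon_0$ is an improper (conditionally convergent) integral. *)

From Stdlib Require Import Reals.
From Coquelicot Require Import Coquelicot.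
Open Scope R_scope.

Definition euler_gamma : R :=
  real (Lim_seq (fun n => sum_f_R0 (fun k => / INR (S k)) n - ln (INR (S n)))).

Definition cRInt (f : R -> C) (a b : R) : C :=
  (RInt (fun t => Re (f t)) a b, RInt (fun t => Im (f t)) a b).

Definition cexpi (theta : R) : C := (cos theta, sin theta).

Definition integrand (x t : R) : C :=
  Cmult (cexpi (2 * PI * t * x)) (RtoC ((ln t + 2 * euler_gamma) / t)).

(* The class F: continuous f on ]0,oo[ such that f(x) and x * conj(f(1/x))
   both extend continuously to x = 0 (i.e. have limits as x -> 0+). *)
Definition in_F (f : R -> C) : Prop :=
  (forall x : R, 0 < x -> continuous f x) /\
  (exists a : C, filterlim f (at_right 0) (locally a)) /\
  (exists b : C, filterlim (fun x => Cmult (RtoC x) (Cconj (f (/ x))))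
                           (at_right 0) (locally b)).

From Stdlib Require Import Reals Lra Psatz Lia.
From Coquelicot Require Import Coquelicot.
Open Scope R_scope.

(* Substituting [s = 2 pi t x], the real and imaginary parts of the integral of the integrand
   over [[v, w]] become [int_{av}^{aw} T s (ln s - ln a + 2 gamma) / s ds] with [a = 2 pi x] and
   [T = cos, sin]. An integration by parts against the bounded antiderivative of [T] shows that
   these converge as [w -> oo]; hence the expression of the statement does not depend on [v],
   and it stays bounded as [x -> oo], so that [x * conj (g (1/x)) -> 0].
   As [a -> 0], the singular part of the integral is a polynomial of degree 2 in [ln a] whose
   coefficients involve [T 0] and the regularized integral
   [K_T = int_0^oo (T s - T 0 [s < 1]) / s ds]. The correction of the statement removes this
   singular part exactly because [K_sin = pi / 2] and [K_cos = - gamma]. Both values come from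
   integrating the Dirichlet sums [1/2 + sum_(k <= n) cos (k u)] and [sum_(k <= n) sin (k u)]
   over [[1 / N^2, pi]] with [N = n + 1/2]: up to an explicit term and a remainder of size
   [O(1/N)], the kernels are [N T (N u) / (N u)], whose integral is [int_{1/N}^{N pi} T s / s ds],
   while the first sum integrates to [pi / 2 + O(1/N)] and, for even [n], the second to
   [2 H_n - H_(n/2) + O(1/n)]; finally [H_n - ln n -> gamma]. *)

Ltac solve_side := repeat split; try (apply Rgt_not_eq || apply Rlt_not_eq); try lra; try nra.
Ltac change_eq_R := match goal with |- ?a = ?b => change (@eq R a b) end.
Ltac continuity_by_derive :=
  apply (ex_derive_continuous (V := R_NormedModule)); auto_derive; solve_side.

(** * Limits and integrals on the real line *)

Section FilterLimits.
Context {T : Type} (F : (T -> Prop) -> Prop).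

Lemma filterlim_R_cauchy {FF : ProperFilter F} (f : T -> R) :
  (forall eps : posreal, exists P, F P /\ forall u v, P u -> P v -> Rabs (f u - f v) < eps) ->
  exists l, filterlim f F (locally l).
Proof.
  intros H. apply (proj1 (filterlim_locally_closely (U := R_CompleteSpace) f)).
  intros P [eps HP]. destruct (H eps) as [Q [FQ HQ]].
  exists Q Q; auto. intros u v Qu Qv. apply HP. now apply HQ.
Qed.

Lemma filterlim_Rabs_sub_le {FF : ProperFilter F} (f e : T -> R) l c e0 :
  filterlim f F (locally l) -> filterlim e F (locally e0) ->
  F (fun u => Rabs (f u - c) <= e u) -> Rabs (l - c) <= e0.
Proof.
  intros Hf He HF.
  destruct (Rle_or_lt (Rabs (l - c)) e0) as [H|H]; auto. exfalso.
  set (d := (Rabs (l - c) - e0) / 2).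
  assert (dpos : 0 < d) by (unfold d; lra).
  assert (H1 : F (fun u => Rabs (f u - l) < d)).
  { apply (Hf (fun y => Rabs (y - l) < d)). now exists (mkposreal d dpos). }
  assert (H2 : F (fun u => Rabs (e u - e0) < d)).
  { apply (He (fun y => Rabs (y - e0) < d)). now exists (mkposreal d dpos). }
  destruct (filter_ex _ (filter_and _ _ HF (filter_and _ _ H1 H2))) as [u [A [B C]]].
  unfold d in *.
  assert (Rabs (l - c) <= Rabs (f u - l) + Rabs (f u - c)).
  { replace (l - c) with (-(f u - l) + (f u - c)) by ring.
    eapply Rle_trans; [apply Rabs_triang|]. rewrite Rabs_Ropp; lra. }
  assert (e u - e0 <= Rabs (e u - e0)) by apply Rle_abs. lra.
Qed.

Context {FF : Filter F}.

Lemma filterlim_C_pair (f g : T -> R) a b :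
  filterlim f F (locally a) -> filterlim g F (locally b) ->
  filterlim (fun x => ((f x, g x) : C)) F (locally ((a, b) : C)).
Proof.
  intros Hf Hg P [eps HP].
  assert (H1 : F (fun x => ball a eps (f x))) by (apply (Hf (ball a eps)); now exists eps).
  assert (H2 : F (fun x => ball b eps (g x))) by (apply (Hg (ball b eps)); now exists eps).
  unfold filtermap. generalize (filter_and _ _ H1 H2). apply filter_imp.
  intros x [A B]. apply HP. now split.
Qed.

Lemma filterlim_Rplus (f g : T -> R) a b :
  filterlim f F (locally a) -> filterlim g F (locally b) ->
  filterlim (fun x => f x + g x) F (locally (a + b)).
Proof.
  intros Hf Hg. apply (filterlim_comp_2 f g (fun u v => plus u v) Hf Hg).
  apply (filterlim_plus (K := R_AbsRing) (V := R_NormedModule) a b).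
Qed.

Lemma filterlim_Rmult (f g : T -> R) a b :
  filterlim f F (locally a) -> filterlim g F (locally b) ->
  filterlim (fun x => f x * g x) F (locally (a * b)).
Proof.
  intros Hf Hg. apply (filterlim_comp_2 f g (fun u v => mult u v) Hf Hg).
  apply (filterlim_mult (K := R_AbsRing) a b).
Qed.

Lemma filterlim_Ropp (f : T -> R) a :
  filterlim f F (locally a) -> filterlim (fun x => - f x) F (locally (- a)).
Proof.
  intros Hf. apply (filterlim_comp _ _ _ f (fun u => opp u) _ _ _ Hf).
  apply (filterlim_opp (K := R_AbsRing) (V := R_NormedModule) a).
Qed.

Lemma filterlim_Rminus (f g : T -> R) a b :
  filterlim f F (locally a) -> filterlim g F (locally b) ->
  filterlim (fun x => f x - g x) F (locally (a - b)).
Proof. intros; apply filterlim_Rplus; auto. now apply filterlim_Ropp. Qed.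

Lemma filterlim_Rabs_le_0 (f g : T -> R) :
  F (fun x => Rabs (f x) <= g x) -> filterlim g F (locally 0) -> filterlim f F (locally 0).
Proof.
  intros Hb Hg P [eps HP].
  assert (H1 : F (fun x => Rabs (g x - 0) < eps)).
  { apply (Hg (fun y => Rabs (y - 0) < eps)). now exists eps. }
  unfold filtermap. generalize (filter_and _ _ Hb H1). apply filter_imp.
  intros x [A B]. apply HP. cbn. unfold AbsRing_ball, abs, minus, plus, opp; simpl.
  rewrite Ropp_0, Rplus_0_r. rewrite Rminus_0_r in B.
  eapply Rle_lt_trans; [apply A|]. eapply Rle_lt_trans; [apply Rle_abs|]. exact B.
Qed.

Lemma filterlim_of_Rabs_sub_le (f e : T -> R) l :
  F (fun x => Rabs (l - f x) <= e x) -> filterlim e F (locally 0) -> filterlim f F (locally l).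
Proof.
  intros Hb He.
  replace l with (l - 0) by ring.
  apply (filterlim_ext (fun x => l - (l - f x))); [intros; ring|].
  apply (filterlim_Rminus (fun _ => l)); [apply filterlim_const|].
  now apply (filterlim_Rabs_le_0 _ e).
Qed.

End FilterLimits.

Lemma at_right_0_interval r : 0 < r -> at_right 0 (fun a => 0 < a <= r).
Proof.
  intros Hr. exists (mkposreal r Hr). intros y Hy Hy0. split; auto.
  cbn in Hy. unfold AbsRing_ball, abs, minus, plus, opp in Hy; simpl in Hy.
  rewrite Ropp_0, Rplus_0_r in Hy. apply Rabs_def2 in Hy. lra.
Qed.

Lemma filterlim_Rmult_l_p_infty a :
  0 < a -> filterlim (fun w => a * w) (Rbar_locally p_infty) (Rbar_locally p_infty).
Proof.
  intros Ha P [M HM]. exists (M / a). intros x Hx. apply HM.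
  apply (Rmult_lt_compat_l a) in Hx; auto.
  replace (a * (M / a)) with M in Hx by (field; lra). exact Hx.
Qed.

Lemma is_derive_continuous (f : R -> R) x df : is_derive f x df -> continuous f x.
Proof. intros H. apply (ex_derive_continuous (V := R_NormedModule)). now exists df. Qed.

Lemma ex_RInt_continuous_le (f : R -> R) a b : a <= b ->
  (forall t, a <= t <= b -> continuous f t) -> ex_RInt f a b.
Proof.
  intros Hab H. apply (ex_RInt_continuous (V := R_CompleteNormedModule)). intros z Hz.
  rewrite Rmin_left in Hz by lra. rewrite Rmax_right in Hz by lra. auto.
Qed.

Lemma ex_RInt_pos (f : R -> R) a b : 0 < a -> 0 < b ->
  (forall t, 0 < t -> continuous f t) -> ex_RInt f a b.
Proof.
  intros Ha Hb Hf. apply (ex_RInt_continuous (V := R_CompleteNormedModule)). intros z Hz.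
  apply Hf. assert (0 < Rmin a b) by (apply Rmin_glb_lt; auto). lra.
Qed.

Lemma RInt_Chasles_pos (f : R -> R) a b c : 0 < a -> 0 < b -> 0 < c ->
  (forall t, 0 < t -> continuous f t) -> RInt f a b + RInt f b c = RInt f a c.
Proof.
  intros Ha Hb Hc Hf. apply (RInt_Chasles (V := R_CompleteNormedModule)); now apply ex_RInt_pos.
Qed.

Lemma RInt_FTC (F f : R -> R) a b : a <= b ->
  (forall t, a <= t <= b -> is_derive F t (f t) /\ continuous f t) ->
  RInt f a b = F b - F a.
Proof.
  intros Hab H. apply (is_RInt_unique (V := R_CompleteNormedModule)).
  apply (is_RInt_derive F f); intros x Hx;
    rewrite Rmin_left in Hx by lra; rewrite Rmax_right in Hx by lra; apply H; auto.
Qed.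

Lemma RInt_FTC_pos (F f : R -> R) a b : 0 < a -> 0 < b ->
  (forall t, 0 < t -> is_derive F t (f t) /\ continuous f t) ->
  RInt f a b = F b - F a.
Proof.
  intros Ha Hb H. destruct (Rle_or_lt a b) as [Hab|Hba].
  - apply RInt_FTC; auto. intros t Ht. apply H. lra.
  - rewrite <- (opp_RInt_swap (V := R_CompleteNormedModule)).
    + rewrite (RInt_FTC F f b a) by (lra || (intros t Ht; apply H; lra)).
      unfold opp; simpl. ring.
    + apply ex_RInt_pos; auto. intros t Ht. apply H, Ht.
Qed.

Lemma RInt_by_parts (P p h dh : R -> R) a b : a <= b ->
  (forall t, a <= t <= b -> is_derive P t (p t) /\ is_derive h t (dh t) /\
     continuous p t /\ continuous dh t) ->
  RInt (fun s => p s * h s) a b = P b * h b - P a * h a - RInt (fun s => P s * dh s) a b.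
Proof.
  intros Hab H.
  assert (Cph : forall t, a <= t <= b -> continuous (fun s => p s * h s) t).
  { intros t Ht. destruct (H t Ht) as [_ [Dh [Cp _]]].
    apply (continuous_mult p h); auto. now apply (is_derive_continuous h t (dh t)). }
  assert (CPdh : forall t, a <= t <= b -> continuous (fun s => P s * dh s) t).
  { intros t Ht. destruct (H t Ht) as [DP [_ [_ Cdh]]].
    apply (continuous_mult P dh); auto. now apply (is_derive_continuous P t (p t)). }
  assert (I : RInt (fun s => p s * h s + P s * dh s) a b = P b * h b - P a * h a).
  { apply (RInt_FTC (fun s => P s * h s)); auto. intros t Ht. split.
    - destruct (H t Ht) as [DP [Dh _]].
      apply (is_derive_ext (fun s => mult (P s) (h s))); [reflexivity|].
      replace (p t * h t + P t * dh t) with (plus (mult (p t) (h t)) (mult (P t) (dh t)))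
        by (unfold plus, mult; simpl; ring).
      apply (is_derive_mult P h t _ _ DP Dh). intros; apply Rmult_comm.
    - apply (continuous_plus (fun s => p s * h s) (fun s => P s * dh s)); auto. }
  rewrite (RInt_plus (V := R_CompleteNormedModule) (fun s => p s * h s) (fun s => P s * dh s))
    in I by (apply ex_RInt_continuous_le; auto).
  simpl in I. unfold plus in I; simpl in I. lra.
Qed.

Lemma RInt_Rabs_le_antiderivative (f g G : R -> R) a b : a <= b ->
  (forall t, a <= t <= b -> continuous f t /\ Rabs (f t) <= g t) ->
  (forall t, a <= t <= b -> is_derive G t (g t) /\ continuous g t) ->
  Rabs (RInt f a b) <= G b - G a.
Proof.
  intros Hab Hf HG.
  assert (Ef : ex_RInt f a b) by (apply ex_RInt_continuous_le; auto; apply Hf).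
  rewrite <- (RInt_FTC G g a b Hab HG).
  eapply Rle_trans; [apply abs_RInt_le; auto|].
  apply RInt_le; auto.
  - now apply ex_RInt_norm.
  - apply ex_RInt_continuous_le; auto. apply HG.
  - intros t Ht. apply Hf; lra.
Qed.

Lemma RInt_scale (f : R -> R) k a b : 0 < k -> 0 < a -> 0 < b ->
  (forall t, 0 < t -> continuous f t) ->
  RInt (fun y => k * f (k * y)) a b = RInt f (k * a) (k * b).
Proof.
  intros Hk Ha Hb Hf.
  generalize (RInt_comp_lin (V := R_CompleteNormedModule) f k 0 a b).
  rewrite !Rplus_0_r. intros K. rewrite <- K.
  - apply RInt_ext. intros; now rewrite Rplus_0_r.
  - apply ex_RInt_pos; auto; nra.
Qed.

Lemma improper_RInt_p_infty (f bnd : R -> R) u0 :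
  (forall t, u0 <= t -> continuous f t) ->
  (forall u w, u0 <= u -> u <= w -> Rabs (RInt f u w) <= bnd u) ->
  filterlim bnd (Rbar_locally p_infty) (locally 0) ->
  exists l, forall u, u0 <= u -> Rabs (l - RInt f u0 u) <= bnd u.
Proof.
  intros Hc Hb Hl.
  assert (Ch : forall u v, u0 <= u -> u <= v -> RInt f u0 v = RInt f u0 u + RInt f u v).
  { intros u v H1 H2. symmetry. apply (RInt_Chasles (V := R_CompleteNormedModule));
      apply ex_RInt_continuous_le; auto; intros; apply Hc; lra. }
  destruct (filterlim_R_cauchy (Rbar_locally p_infty) (fun w => RInt f u0 w)) as [l Hlim].
  - intros eps.
    destruct (Hl (fun y => Rabs (y - 0) < eps)) as [M HM]; [now exists eps|].
    exists (fun w => Rmax M u0 < w). split; [now exists (Rmax M u0)|].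
    assert (Small : forall u v, Rmax M u0 < u -> u <= v -> Rabs (RInt f u v) < eps).
    { intros u v Hu Huv. generalize (Rmax_l M u0) (Rmax_r M u0); intros.
      eapply Rle_lt_trans; [apply Hb; lra|].
      specialize (HM u ltac:(lra)). simpl in HM. rewrite Rminus_0_r in HM.
      eapply Rle_lt_trans; [apply Rle_abs|exact HM]. }
    assert (Hm := Rmax_r M u0).
    intros u v Hu Hv. destruct (Rle_or_lt u v) as [Huv|Huv].
    + rewrite (Ch u v) by lra.
      replace (RInt f u0 u - (RInt f u0 u + RInt f u v)) with (- RInt f u v) by ring.
      rewrite Rabs_Ropp. now apply Small.
    + rewrite (Ch v u) by lra.
      replace (RInt f u0 v + RInt f v u - RInt f u0 v) with (0 + RInt f v u) by ring.
      rewrite Rplus_0_l. apply Small; lra.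
  - exists l. intros u Hu.
    apply (filterlim_Rabs_sub_le (Rbar_locally p_infty) (fun w => RInt f u0 w) (fun _ => bnd u)
             l _ (bnd u) Hlim (filterlim_const _)).
    exists u. intros w Hw. rewrite (Ch u w) by lra.
    replace (RInt f u0 u + RInt f u w - RInt f u0 u) with (0 + RInt f u w) by ring.
    rewrite Rplus_0_l. apply Hb; lra.
Qed.

Lemma improper_RInt_at_0 (f g G : R -> R) G0 :
  (forall t, 0 < t <= 1 -> continuous f t /\ Rabs (f t) <= g t) ->
  (forall t, 0 < t <= 1 -> is_derive G t (g t) /\ continuous g t) ->
  filterlim G (at_right 0) (locally G0) ->
  exists L, filterlim (fun a => RInt f a 1) (at_right 0) (locally L) /\
    forall a, 0 < a <= 1 -> Rabs (L - RInt f a 1) <= G a - G0.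
Proof.
  intros Hf Hd HG.
  assert (K : forall b a, 0 < b <= a -> a <= 1 -> Rabs (RInt f b 1 - RInt f a 1) <= G a - G b).
  { intros b a Hb Ha.
    rewrite <- (RInt_Chasles (V := R_CompleteNormedModule) f b a 1)
      by (apply ex_RInt_continuous_le; try lra; intros; apply Hf; lra).
    replace (plus (RInt f b a) (RInt f a 1) - RInt f a 1) with (0 + RInt f b a)
      by (unfold plus; simpl; ring).
    rewrite Rplus_0_l.
    apply (RInt_Rabs_le_antiderivative f g G); try lra; intros; [apply Hf|apply Hd]; lra. }
  destruct (filterlim_R_cauchy (at_right 0) (fun a => RInt f a 1)) as [L HL].
  - intros eps.
    assert (H1 : at_right 0 (fun a => Rabs (G a - G0) < eps / 2)).
    { apply (HG (fun y => Rabs (y - G0) < eps / 2)).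
      assert (0 < eps / 2) by (destruct eps; simpl; lra).
      now exists (mkposreal _ H). }
    exists (fun a => Rabs (G a - G0) < eps / 2 /\ 0 < a <= 1). split.
    { apply filter_and; auto. apply at_right_0_interval; lra. }
    intros u v [Hu1 Hu2] [Hv1 Hv2].
    apply Rabs_def2 in Hu1. apply Rabs_def2 in Hv1.
    destruct (Rle_or_lt u v) as [Huv|Huv].
    + eapply Rle_lt_trans; [apply K; lra|]. lra.
    + rewrite Rabs_minus_sym. eapply Rle_lt_trans; [apply K; lra|]. lra.
  - exists L. split; auto. intros a Ha.
    apply (filterlim_Rabs_sub_le (at_right 0) (fun b => RInt f b 1) (fun b => G a - G b)
             L _ (G a - G0) HL).
    + apply (filterlim_Rminus _ (fun _ => G a)); auto. apply filterlim_const.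
    + generalize (at_right_0_interval a ltac:(lra)). apply filter_imp.
      intros b Hb. apply K; lra.
Qed.

(* The second mean value theorem in the form of an integration by parts: the bound only
   involves the decreasing weight [h] at the left end point. *)
Lemma RInt_oscillating_tail_le (P p h dh : R -> R) u0 :
  (forall t, u0 <= t -> is_derive P t (p t) /\ is_derive h t (dh t) /\
     continuous p t /\ continuous dh t /\ Rabs (P t) <= 1 /\ dh t <= 0 /\ 0 <= h t) ->
  forall u w, u0 <= u -> u <= w -> Rabs (RInt (fun s => p s * h s) u w) <= 2 * h u.
Proof.
  intros H u w Hu Huw.
  rewrite (RInt_by_parts P p h dh u w Huw)
    by (intros t Ht; destruct (H t ltac:(lra)) as [A [B [C [D _]]]]; auto).
  assert (Bdh : Rabs (RInt (fun s => P s * dh s) u w) <= h u - h w).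
  { replace (h u - h w) with (- h w - - h u) by ring.
    apply (RInt_Rabs_le_antiderivative _ (fun s => - dh s) (fun s => - h s)); auto; intros t Ht;
      destruct (H t ltac:(lra)) as [DP [Dh [Cp [Cdh [HP [Hdh _]]]]]]; split.
    - apply (continuous_mult P dh); auto. now apply (is_derive_continuous P t (p t)).
    - rewrite Rabs_mult, (Rabs_left1 (dh t)) by auto. nra.
    - now apply (is_derive_opp h).
    - now apply (continuous_opp dh). }
  destruct (H u ltac:(lra)) as [_ [_ [_ [_ [Pu [_ hu]]]]]].
  destruct (H w ltac:(lra)) as [_ [_ [_ [_ [Pw [_ hw]]]]]].
  assert (Rabs (P w * h w) <= h w) by (rewrite Rabs_mult, (Rabs_pos_eq (h w)) by auto; nra).
  assert (Rabs (P u * h u) <= h u) by (rewrite Rabs_mult, (Rabs_pos_eq (h u)) by auto; nra).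
  eapply Rle_trans; [apply Rabs_triang|].
  eapply Rle_trans; [apply Rplus_le_compat_r; unfold Rminus; apply Rabs_triang|].
  rewrite !Rabs_Ropp. lra.
Qed.

Lemma continuous_RInt_lower (f : R -> R) c b : 0 < c -> 0 < b ->
  (forall t, 0 < t -> continuous f t) -> continuous (fun y => RInt f y b) c.
Proof.
  intros Hc Hb Hf. apply (continuous_RInt_2 f c b (fun y => RInt f y b)).
  assert (P : 0 < c / 2) by lra.
  exists (mkposreal _ P). intros z Hz. apply (RInt_correct (V := R_CompleteNormedModule)).
  apply ex_RInt_pos; auto.
  cbn in Hz. unfold AbsRing_ball, abs, minus, plus, opp in Hz; simpl in Hz.
  apply Rabs_def2 in Hz. lra.
Qed.

Lemma PI_bounds : 3 <= PI <= 4.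
Proof. split; [generalize PI2_3_2; lra | apply PI_4]. Qed.

Lemma sin_le_self s : 0 <= s -> sin s <= s.
Proof.
  intros Hs. destruct (Req_dec s 0) as [->|Hs0]; [rewrite sin_0; lra|].
  apply Rlt_le, sin_lt_x. lra.
Qed.

Lemma Rabs_sin_le_self s : 0 <= s -> Rabs (sin s) <= s.
Proof.
  intros Hs. generalize (sin_le_self s Hs) (SIN_bound s) PI_bounds; intros.
  apply Rabs_le. split; [|lra].
  destruct (Rle_or_lt s 1); [|lra].
  assert (0 <= sin s) by (apply sin_ge_0; lra). lra.
Qed.

Lemma sin_ge_cubic s : 0 <= s <= PI -> s - s ^ 3 / 6 <= sin s.
Proof.
  intros Hs. destruct (sin_bound s 0 ltac:(lra) ltac:(lra)) as [L _].
  unfold sin_approx, sin_term in L. simpl in L. lra.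
Qed.

Lemma cos_bounds_quartic s : 0 <= s <= PI / 2 ->
  1 - s ^ 2 / 2 <= cos s <= 1 - s ^ 2 / 2 + s ^ 4 / 24.
Proof.
  intros Hs. generalize PI_bounds; intros.
  destruct (cos_bound s 0 ltac:(lra) ltac:(lra)) as [L U].
  unfold cos_approx, cos_term in L, U. simpl in L, U. lra.
Qed.

Lemma Rabs_cos_sub_1_le s : 0 <= s <= 1 -> Rabs (cos s - 1) <= s ^ 2 / 2.
Proof.
  intros Hs. generalize PI_bounds (COS_bound s); intros.
  destruct (cos_bounds_quartic s ltac:(lra)). rewrite Rabs_left1 by lra. lra.
Qed.

Lemma Rabs_div_le x s c : 0 < s -> Rabs x <= c * s -> Rabs (x / s) <= c.
Proof.
  intros Hs H. unfold Rdiv. rewrite Rabs_mult, Rabs_inv, (Rabs_pos_eq s) by lra.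
  apply (Rmult_le_reg_r s); auto. rewrite Rmult_assoc, Rinv_l by lra. lra.
Qed.

Lemma ln_le_sub_1 y : 0 < y -> ln y <= y - 1.
Proof. intros Hy. generalize (exp_ineq1_le (ln y)). rewrite exp_ln by auto. lra. Qed.

Lemma filterlim_id_at_right_0 : filterlim (fun s => s) (at_right 0) (locally 0).
Proof. intros P [eps HP]. exists eps. intros y Hy _. now apply HP. Qed.

Lemma filterlim_mult_ln_at_right_0 : filterlim (fun s => s * ln s) (at_right 0) (locally 0).
Proof.
  assert (H : filterlim (fun s => ln (/ s) / (/ s)) (at_right 0) (locally 0)).
  { apply (filterlim_comp _ _ _ Rinv (fun y => ln y / y) _ (Rbar_locally p_infty)).
    - apply filterlim_Rinv_0_right.
    - apply is_lim_div_ln_p. }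
  apply filterlim_Ropp in H. rewrite Ropp_0 in H.
  apply (filterlim_ext_loc (fun s => - (ln (/ s) / (/ s)))); [|exact H].
  generalize (at_right_0_interval 1 ltac:(lra)). apply filter_imp.
  intros s [Hs _]. rewrite ln_Rinv by auto. field. lra.
Qed.

Lemma filterlim_inv_p_infty : filterlim (fun y => / y) (Rbar_locally p_infty) (locally 0).
Proof.
  replace (locally 0) with (Rbar_locally (Rbar_inv p_infty)) by reflexivity.
  apply (is_lim_inv (fun y => y) p_infty p_infty); [apply is_lim_id | discriminate].
Qed.

Lemma filterlim_ln_sqr_div_p_infty :
  filterlim (fun y => ln y ^ 2 / y) (Rbar_locally p_infty) (locally 0).
Proof.
  assert (S : filterlim (fun y => ln (sqrt y) / sqrt y) (Rbar_locally p_infty) (locally 0)).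
  { apply (filterlim_comp _ _ _ sqrt (fun z => ln z / z) _ (Rbar_locally p_infty)).
    - apply filterlim_sqrt_p.
    - apply is_lim_div_ln_p. }
  replace 0 with (4 * (0 * 0)) by ring.
  apply (filterlim_ext_loc (fun y => 4 * ((ln (sqrt y) / sqrt y) * (ln (sqrt y) / sqrt y)))).
  - exists 0. intros y Hy.
    assert (Q : 0 < sqrt y) by (apply sqrt_lt_R0; lra).
    assert (E : ln y = 2 * ln (sqrt y)).
    { rewrite <- (sqrt_sqrt y) at 1 by lra. rewrite ln_mult by lra. ring. }
    rewrite E. replace ((2 * ln (sqrt y)) ^ 2 / y)
      with ((2 * ln (sqrt y)) ^ 2 / (sqrt y * sqrt y)) by (rewrite sqrt_sqrt; lra).
    field. lra.
  - apply (filterlim_Rmult _ (fun _ => 4)); [apply filterlim_const|].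
    apply (filterlim_Rmult _ (fun y => ln (sqrt y) / sqrt y)); exact S.
Qed.

Lemma filterlim_Rmult_l_at_right_0 k :
  0 < k -> filterlim (fun x => k * x) (at_right 0) (at_right 0).
Proof.
  intros Hk P [eps HP]. assert (q : 0 < eps / k) by (apply Rdiv_lt_0_compat; [apply cond_pos|lra]).
  exists (mkposreal _ q). intros y Hy Hy0. apply HP; [|nra].
  cbn in *. unfold AbsRing_ball, abs, minus, plus, opp in *; simpl in *.
  rewrite Ropp_0, Rplus_0_r in *. rewrite Rabs_pos_eq in * by nra.
  apply (Rmult_lt_compat_l k) in Hy; [|lra].
  replace (k * (eps / k)) with (pos eps) in Hy by (field; lra). lra.
Qed.

Lemma filterlim_ln_mult_rate_0 (f : R -> R) l c :
  (forall a, 0 < a <= 1 -> Rabs (f a - l) <= a) ->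
  filterlim (fun a => (c - ln a) * (f a - l)) (at_right 0) (locally 0).
Proof.
  intros Hf.
  apply (filterlim_Rabs_le_0 _ _ (fun a => Rabs c * a - a * ln a)).
  - generalize (at_right_0_interval 1 ltac:(lra)). apply filter_imp. intros a Ha.
    assert (ln a <= 0) by (rewrite <- ln_1; apply ln_le; lra).
    assert (Rabs (c - ln a) <= Rabs c - ln a).
    { generalize (Rabs_triang c (- ln a)). rewrite Rabs_Ropp, (Rabs_left1 (ln a)) by lra.
      unfold Rminus. lra. }
    rewrite Rabs_mult. generalize (Hf a Ha) (Rabs_pos (c - ln a)) (Rabs_pos (f a - l)). nra.
  - replace 0 with (Rabs c * 0 - 0) at 2 by ring.
    apply (filterlim_Rminus _ (fun a => Rabs c * a) (fun a => a * ln a));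
      [|apply filterlim_mult_ln_at_right_0].
    apply (filterlim_Rmult _ (fun _ => Rabs c)); [apply filterlim_const|].
    apply filterlim_id_at_right_0.
Qed.

Lemma filterlim_mult_inv_at_right_0 (h : R -> R) :
  filterlim (fun y => / y * h y) (Rbar_locally p_infty) (locally 0) ->
  filterlim (fun x => x * h (/ x)) (at_right 0) (locally 0).
Proof.
  intros H.
  apply (filterlim_ext_loc (fun x => / (/ x) * h (/ x))).
  - generalize (at_right_0_interval 1 ltac:(lra)). apply filter_imp. intros x [Hx _].
    now rewrite Rinv_inv.
  - apply (filterlim_comp _ _ _ Rinv (fun y => / y * h y) _ (Rbar_locally p_infty)); auto.
    apply filterlim_Rinv_0_right.
Qed.

Lemma is_derive_opp_cos t : is_derive (fun s => - cos s) t (sin t).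
Proof. auto_derive; auto. ring. Qed.

Lemma Rabs_sin_le_1 t : Rabs (sin t) <= 1.
Proof. apply Rabs_le, SIN_bound. Qed.

Lemma Rabs_opp_cos_le_1 t : Rabs (- cos t) <= 1.
Proof. rewrite Rabs_Ropp. apply Rabs_le, COS_bound. Qed.

(** * The oscillatory integrals of [T s / s] and [T s * ln s / s] *)

Definition in_F_real (h : R -> R) : Prop :=
  (forall x, 0 < x -> continuous h x) /\
  (exists a, filterlim h (at_right 0) (locally a)) /\
  (exists b, filterlim (fun x => x * h (/ x)) (at_right 0) (locally b)).

Definition osc_div (T : R -> R) (s : R) : R := T s / s.
Definition osc_ln_div (T : R -> R) (s : R) : R := T s * (ln s / s).
Definition osc_reg_div (T : R -> R) (s : R) : R := (T s - T 0) / s.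
Definition osc_reg_ln_div (T : R -> R) (s : R) : R := (T s - T 0) * (ln s / s).

Definition osc_integrand (T : R -> R) (x t : R) : R :=
  T (2 * PI * t * x) * ((ln t + 2 * euler_gamma) / t).

Section Oscillatory.
Variables T P : R -> R.
Hypothesis P_derive : forall t, is_derive P t (T t).
Hypothesis T_continuous : forall t, continuous T t.
Hypothesis P_bounded : forall t, Rabs (P t) <= 1.
Hypothesis T_lipschitz_0 : forall s, 0 < s <= 1 -> Rabs (T s - T 0) <= s.

Lemma osc_div_continuous t : 0 < t -> continuous (osc_div T) t.
Proof. intros. apply (continuous_mult T (fun s => / s)); auto. continuity_by_derive. Qed.

Lemma osc_ln_div_continuous t : 0 < t -> continuous (osc_ln_div T) t.
Proof. intros. apply (continuous_mult T (fun s => ln s / s)); auto. continuity_by_derive. Qed.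

Lemma osc_reg_div_continuous t : 0 < t -> continuous (osc_reg_div T) t.
Proof.
  intros. apply (continuous_mult (fun s => T s - T 0) (fun s => / s)); [|continuity_by_derive].
  apply (continuous_minus T (fun _ => T 0)); auto. apply continuous_const.
Qed.

Lemma osc_reg_ln_div_continuous t : 0 < t -> continuous (osc_reg_ln_div T) t.
Proof.
  intros. apply (continuous_mult (fun s => T s - T 0) (fun s => ln s / s)); [|continuity_by_derive].
  apply (continuous_minus T (fun _ => T 0)); auto. apply continuous_const.
Qed.

Lemma osc_div_tail : exists I : R, forall u, 3 <= u -> Rabs (I - RInt (osc_div T) 3 u) <= 2 / u.
Proof.
  apply improper_RInt_p_infty.
  - intros; apply osc_div_continuous; lra.
  - intros u w Hu Huw.
    apply (RInt_oscillating_tail_le P T (fun s => / s) (fun s => - / s ^ 2) 3); auto.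
    intros t Ht.
    assert (0 < / t ^ 2) by (apply Rinv_0_lt_compat, pow_lt; lra).
    assert (0 < / t) by (apply Rinv_0_lt_compat; lra).
    split; [|split; [|split; [|split; [|split; [|split]]]]]; auto; try lra.
    + auto_derive; [lra | field; lra].
    + continuity_by_derive.
  - replace 0 with (2 * 0) by ring.
    apply (filterlim_Rmult _ (fun _ => 2)); [apply filterlim_const | apply filterlim_inv_p_infty].
Qed.

Lemma osc_ln_div_tail :
  exists I : R, forall u, 3 <= u -> Rabs (I - RInt (osc_ln_div T) 3 u) <= 2 * (ln u / u).
Proof.
  apply improper_RInt_p_infty.
  - intros; apply osc_ln_div_continuous; lra.
  - intros u w Hu Huw.
    apply (RInt_oscillating_tail_le P T (fun s => ln s / s) (fun s => (1 - ln s) / s ^ 2) 3);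
      auto.
    intros t Ht.
    assert (1 <= ln t).
    { rewrite <- ln_exp at 1. apply ln_le; [apply exp_pos|].
      generalize exp_le_3; lra. }
    assert (0 < / t ^ 2) by (apply Rinv_0_lt_compat, pow_lt; lra).
    assert (0 < / t) by (apply Rinv_0_lt_compat; lra).
    split; [|split; [|split; [|split; [|split; [|split]]]]]; auto; unfold Rdiv; try nra.
    + auto_derive; [lra | field; lra].
    + continuity_by_derive.
  - replace 0 with (2 * 0) by ring.
    apply (filterlim_Rmult _ (fun _ => 2)); [apply filterlim_const | apply is_lim_div_ln_p].
Qed.

Lemma osc_reg_div_head :
  exists Q : R, forall a, 0 < a <= 1 -> Rabs (Q - RInt (osc_reg_div T) a 1) <= a.
Proof.
  destruct (improper_RInt_at_0 (osc_reg_div T) (fun _ => 1) (fun s => s) 0) as [Q [_ HQ]].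
  - intros t Ht. split; [apply osc_reg_div_continuous; lra|].
    apply Rabs_div_le; [lra|]. rewrite Rmult_1_l. auto.
  - intros t Ht. split; [auto_derive; auto | apply continuous_const].
  - apply filterlim_id_at_right_0.
  - exists Q. intros a Ha. specialize (HQ a Ha). simpl in HQ. lra.
Qed.

Lemma osc_reg_ln_div_head :
  exists Q : R, filterlim (fun a => RInt (osc_reg_ln_div T) a 1) (at_right 0) (locally Q).
Proof.
  destruct (improper_RInt_at_0 (osc_reg_ln_div T) (fun s => - ln s) (fun s => s - s * ln s) 0)
    as [Q [HQ _]].
  - intros t Ht. split; [apply osc_reg_ln_div_continuous; lra|].
    assert (ln t <= 0) by (rewrite <- ln_1; apply ln_le; lra).
    generalize (T_lipschitz_0 t Ht); intros.
    unfold osc_reg_ln_div.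
    replace ((T t - T 0) * (ln t / t)) with ((T t - T 0) * ln t / t) by (field; lra).
    apply Rabs_div_le; [lra|]. rewrite Rabs_mult, (Rabs_left1 (ln t)) by lra.
    generalize (Rabs_pos (T t - T 0)); nra.
  - intros t Ht. split; [auto_derive; [lra | field; lra] | continuity_by_derive].
  - generalize (filterlim_Rminus _ _ _ _ _ filterlim_id_at_right_0 filterlim_mult_ln_at_right_0).
    now rewrite Rminus_0_r.
  - now exists Q.
Qed.

Lemma RInt_osc_div_split a : 0 < a ->
  RInt (osc_div T) a 1 = RInt (osc_reg_div T) a 1 - T 0 * ln a.
Proof.
  intros Ha.
  rewrite (RInt_ext (osc_div T) (fun s => osc_reg_div T s + T 0 * / s)).
  - rewrite (RInt_plus (V := R_CompleteNormedModule)).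
    + rewrite (RInt_FTC_pos (fun s => T 0 * ln s) (fun s => T 0 * / s)); try lra.
      * rewrite ln_1. unfold plus; simpl. change_eq_R. ring.
      * intros t Ht. split; [auto_derive; [lra | field; lra] | continuity_by_derive].
    + apply ex_RInt_pos; try lra. apply osc_reg_div_continuous.
    + apply ex_RInt_pos; try lra. intros; continuity_by_derive.
  - intros s Hs. assert (0 < Rmin a 1) by (apply Rmin_glb_lt; lra).
    unfold osc_div, osc_reg_div. change_eq_R. field. lra.
Qed.

Lemma RInt_osc_ln_div_split a : 0 < a ->
  RInt (osc_ln_div T) a 1 = RInt (osc_reg_ln_div T) a 1 - T 0 / 2 * ln a ^ 2.
Proof.
  intros Ha.
  rewrite (RInt_ext (osc_ln_div T) (fun s => osc_reg_ln_div T s + T 0 * (ln s / s))).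
  - rewrite (RInt_plus (V := R_CompleteNormedModule)).
    + rewrite (RInt_FTC_pos (fun s => T 0 / 2 * ln s ^ 2) (fun s => T 0 * (ln s / s))); try lra.
      * rewrite ln_1. unfold plus; simpl. change_eq_R. field.
      * intros t Ht. split; [auto_derive; [lra | field; lra] | continuity_by_derive].
    + apply ex_RInt_pos; try lra. apply osc_reg_ln_div_continuous.
    + apply ex_RInt_pos; try lra. intros; continuity_by_derive.
  - intros s Hs. unfold osc_ln_div, osc_reg_ln_div. change_eq_R. ring.
Qed.

Lemma RInt_osc_comb c x y : 0 < x -> 0 < y ->
  RInt (fun s => osc_ln_div T s + c * osc_div T s) x y
  = RInt (osc_ln_div T) x y + c * RInt (osc_div T) x y.
Proof.
  intros Hx Hy. rewrite (RInt_plus (V := R_CompleteNormedModule)).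
  - unfold plus; simpl. f_equal. apply (RInt_scal (V := R_CompleteNormedModule)).
    apply ex_RInt_pos; auto. apply osc_div_continuous.
  - apply ex_RInt_pos; auto. apply osc_ln_div_continuous.
  - apply ex_RInt_pos; auto. intros t Ht.
    apply (continuous_mult (fun _ => c) (osc_div T)); [apply continuous_const|].
    now apply osc_div_continuous.
Qed.

Variables I Il Q P0 : R.
Hypothesis I_rate : forall u, 3 <= u -> Rabs (I - RInt (osc_div T) 3 u) <= 2 / u.
Hypothesis Il_rate : forall u, 3 <= u -> Rabs (Il - RInt (osc_ln_div T) 3 u) <= 2 * (ln u / u).
Hypothesis Q_rate : forall a, 0 < a <= 1 -> Rabs (Q - RInt (osc_reg_div T) a 1) <= a.
Hypothesis P0_limit :
  filterlim (fun a => RInt (osc_reg_ln_div T) a 1) (at_right 0) (locally P0).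

(* The regularized improper integral of [T s / s] over ]0, oo[, where [T 0 / s] is
   subtracted on ]0, 1]. *)
Definition osc_const : R := Q + RInt (osc_div T) 1 3 + I.

Lemma osc_const_approx a b : 0 < a <= 1 -> 3 <= b ->
  Rabs (osc_const - (RInt (osc_div T) a b + T 0 * ln a)) <= a + 2 / b.
Proof.
  intros Ha Hb.
  rewrite <- (RInt_Chasles_pos (osc_div T) a 3 b), <- (RInt_Chasles_pos (osc_div T) a 1 3)
    by (lra || apply osc_div_continuous).
  rewrite RInt_osc_div_split by lra.
  unfold osc_const.
  replace (Q + RInt (osc_div T) 1 3 + I - (RInt (osc_reg_div T) a 1 - T 0 * ln a
             + RInt (osc_div T) 1 3 + RInt (osc_div T) 3 b + T 0 * ln a))
    with ((Q - RInt (osc_reg_div T) a 1) + (I - RInt (osc_div T) 3 b)) by ring.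
  eapply Rle_trans; [apply Rabs_triang|]. generalize (Q_rate a Ha) (I_rate b Hb). lra.
Qed.

(* After the substitution [s = 2 pi t x], the improper integral
   [int_1^oo osc_integrand T x t dt]. *)
Definition osc_part (x : R) : R :=
  let a := 2 * PI * x in
  (RInt (osc_ln_div T) a 3 + Il) + (2 * euler_gamma - ln a) * (RInt (osc_div T) a 3 + I).

(* For [K = osc_const], the part of [osc_part x] that is unbounded as [x -> 0+]. *)
Definition osc_correction (K x : R) : R :=
  T 0 / 2 * ln (/ x) ^ 2 + (K + (2 * euler_gamma - ln (2 * PI)) * T 0) * ln (/ x).

Lemma osc_part_continuous x : 0 < x -> continuous osc_part x.
Proof.
  intros Hx. assert (Hp := PI_RGT_0).
  assert (Lower : forall f : R -> R, (forall t, 0 < t -> continuous f t) ->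
            continuous (fun y => RInt f (2 * PI * y) 3) x).
  { intros f Hf. apply (continuous_comp (fun y => 2 * PI * y) (fun c => RInt f c 3)).
    - continuity_by_derive.
    - apply continuous_RInt_lower; auto; nra. }
  unfold osc_part, continuous. cbv beta zeta.
  apply (filterlim_Rplus (locally x));
    [apply (filterlim_Rplus (locally x)) | apply (filterlim_Rmult (locally x))].
  - now apply Lower, osc_ln_div_continuous.
  - apply filterlim_const.
  - apply (ex_derive_continuous (V := R_NormedModule)
             (fun y => 2 * euler_gamma - ln (2 * PI * y))). auto_derive. nra.
  - apply (filterlim_Rplus (locally x));
      [now apply Lower, osc_div_continuous | apply filterlim_const].
Qed.

Lemma osc_part_corrected_limit_0 :
  exists c, filterlim (fun x => osc_part x - osc_correction osc_const x) (at_right 0) (locally c).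
Proof.
  assert (Hp := PI_RGT_0).
  set (K := osc_const). set (lam := ln (2 * PI)).
  set (C := RInt (osc_ln_div T) 1 3 + Il + 2 * euler_gamma * K - T 0 / 2 * lam ^ 2
            - (K + (2 * euler_gamma - lam) * T 0) * lam).
  exists (P0 + C + 0).
  apply (filterlim_ext_loc (fun x => RInt (osc_reg_ln_div T) (2 * PI * x) 1 + C
     + (2 * euler_gamma - ln (2 * PI * x)) * (RInt (osc_reg_div T) (2 * PI * x) 1 - Q))).
  - generalize (at_right_0_interval 1 ltac:(lra)). apply filter_imp. intros x [Hx _].
    assert (Ha : 0 < 2 * PI * x) by nra.
    unfold osc_part, osc_correction. cbv zeta.
    rewrite <- (RInt_Chasles_pos (osc_ln_div T) (2 * PI * x) 1 3),
            <- (RInt_Chasles_pos (osc_div T) (2 * PI * x) 1 3)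
      by (lra || apply osc_ln_div_continuous || apply osc_div_continuous).
    rewrite RInt_osc_ln_div_split, RInt_osc_div_split by auto.
    replace (ln (/ x)) with (lam - ln (2 * PI * x))
      by (unfold lam; rewrite ln_Rinv, (ln_mult (2 * PI) x) by lra; ring).
    unfold C, K, lam, osc_const. change_eq_R. field.
  - apply (filterlim_Rplus (at_right 0));
      [apply (filterlim_Rplus (at_right 0)); [|apply filterlim_const]|].
    + apply (filterlim_comp _ _ _ (fun x => 2 * PI * x) (fun a => RInt (osc_reg_ln_div T) a 1)
               _ (at_right 0)); [apply filterlim_Rmult_l_at_right_0; nra | exact P0_limit].
    + apply (filterlim_comp _ _ _ (fun x => 2 * PI * x)
               (fun a => (2 * euler_gamma - ln a) * (RInt (osc_reg_div T) a 1 - Q)) _ (at_right 0)).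
      * apply filterlim_Rmult_l_at_right_0. nra.
      * apply filterlim_ln_mult_rate_0. intros a Ha. rewrite Rabs_minus_sym. auto.
Qed.

Lemma osc_part_bound y : 3 <= 2 * PI * y -> Rabs (osc_part y) <= 4 + Rabs (2 * euler_gamma).
Proof.
  intros Ha. unfold osc_part. cbv zeta. set (a := 2 * PI * y) in *.
  rewrite <- (opp_RInt_swap (V := R_CompleteNormedModule) (osc_ln_div T)),
          <- (opp_RInt_swap (V := R_CompleteNormedModule) (osc_div T))
    by (apply ex_RInt_pos; try lra; apply osc_ln_div_continuous || apply osc_div_continuous).
  unfold opp; simpl.
  generalize (Il_rate a Ha) (I_rate a Ha).
  set (el := Il - RInt (osc_ln_div T) 3 a). set (e := I - RInt (osc_div T) 3 a).
  replace (- RInt (osc_ln_div T) 3 a + Il) with el by (unfold el; ring).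
  replace (- RInt (osc_div T) 3 a + I) with e by (unfold e; ring).
  intros Hel He.
  assert (0 <= ln a) by (rewrite <- ln_1; apply ln_le; lra).
  assert (ln a <= a) by (generalize (ln_le_sub_1 a ltac:(lra)); lra).
  assert (Hla : ln a / a <= 1).
  { apply (Rmult_le_reg_r a); [lra|]. unfold Rdiv. rewrite Rmult_assoc, Rinv_l by lra. lra. }
  assert (Hel' : Rabs el <= 2) by lra.
  assert (Hb : Rabs (2 * euler_gamma - ln a) <= Rabs (2 * euler_gamma) + ln a).
  { generalize (Rabs_triang (2 * euler_gamma) (- ln a)).
    rewrite Rabs_Ropp, (Rabs_pos_eq (ln a)) by lra. unfold Rminus. lra. }
  assert (He' : Rabs e <= 2 / 3).
  { eapply Rle_trans; [exact He|]. unfold Rdiv. apply Rmult_le_compat_l; [lra|].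
    apply Rinv_le_contravar; lra. }
  assert (Hbe : Rabs (2 * euler_gamma - ln a) * Rabs e <= Rabs (2 * euler_gamma) + 2).
  { assert (Rabs (2 * euler_gamma - ln a) * Rabs e
              <= (Rabs (2 * euler_gamma) + ln a) * Rabs e)
      by (apply Rmult_le_compat_r; [apply Rabs_pos|lra]).
    assert (ln a * Rabs e <= ln a * (2 / a)) by (apply Rmult_le_compat_l; lra).
    assert (ln a * (2 / a) <= 2).
    { replace (ln a * (2 / a)) with (2 * (ln a / a)) by (field; lra). lra. }
    generalize (Rabs_pos (2 * euler_gamma)). nra. }
  eapply Rle_trans; [apply Rabs_triang|]. rewrite Rabs_mult. lra.
Qed.

Lemma osc_part_growth : filterlim (fun y => / y * osc_part y) (Rbar_locally p_infty) (locally 0).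
Proof.
  assert (Hp := PI_RGT_0).
  apply (filterlim_Rabs_le_0 _ _ (fun y => (4 + Rabs (2 * euler_gamma)) * / y)).
  - exists (3 / (2 * PI)). intros y Hy.
    assert (0 < 3 / (2 * PI)) by (apply Rdiv_lt_0_compat; lra).
    assert (Ha : 3 <= 2 * PI * y).
    { apply (Rmult_lt_compat_l (2 * PI)) in Hy; [|lra].
      replace (2 * PI * (3 / (2 * PI))) with 3 in Hy by (field; lra). lra. }
    rewrite Rabs_mult, Rabs_inv, (Rabs_pos_eq y), Rmult_comm by lra.
    apply Rmult_le_compat_r; [apply Rlt_le, Rinv_0_lt_compat; lra|].
    now apply osc_part_bound.
  - replace 0 with ((4 + Rabs (2 * euler_gamma)) * 0) by ring.
    apply (filterlim_Rmult _ (fun _ => _)); [apply filterlim_const|apply filterlim_inv_p_infty].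
Qed.

Lemma osc_correction_growth K :
  filterlim (fun y => / y * osc_correction K y) (Rbar_locally p_infty) (locally 0).
Proof.
  set (c := K + (2 * euler_gamma - ln (2 * PI)) * T 0).
  apply (filterlim_ext_loc (fun y => T 0 / 2 * (ln y ^ 2 / y) - c * (ln y / y))).
  - exists 0. intros y Hy. unfold osc_correction. fold c.
    rewrite ln_Rinv by lra. field. lra.
  - replace (locally 0) with (locally (T 0 / 2 * 0 - c * 0)) by (f_equal; ring).
    apply (filterlim_Rminus (Rbar_locally p_infty));
      apply (filterlim_Rmult (Rbar_locally p_infty) (fun _ => _)); try apply filterlim_const.
    + apply filterlim_ln_sqr_div_p_infty.
    + apply is_lim_div_ln_p.
Qed.

Lemma RInt_osc_div_limit :
  filterlim (fun w => RInt (osc_div T) 3 w) (Rbar_locally p_infty) (locally I).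
Proof.
  apply (filterlim_of_Rabs_sub_le _ _ (fun w => 2 * / w)).
  - exists 3. intros w Hw. apply I_rate. lra.
  - replace (locally 0) with (locally (2 * 0)) by (f_equal; ring).
    apply (filterlim_Rmult _ (fun _ => 2)); [apply filterlim_const | apply filterlim_inv_p_infty].
Qed.

Lemma RInt_osc_ln_div_limit :
  filterlim (fun w => RInt (osc_ln_div T) 3 w) (Rbar_locally p_infty) (locally Il).
Proof.
  apply (filterlim_of_Rabs_sub_le _ _ (fun w => 2 * (ln w / w))).
  - exists 3. intros w Hw. apply Il_rate. lra.
  - replace (locally 0) with (locally (2 * 0)) by (f_equal; ring).
    apply (filterlim_Rmult _ (fun _ => 2)); [apply filterlim_const | apply is_lim_div_ln_p].
Qed.

Lemma osc_integrand_scale x t : 0 < x -> 0 < t ->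
  osc_integrand T x t = 2 * PI * x * (osc_ln_div T (2 * PI * x * t)
    + (2 * euler_gamma - ln (2 * PI * x)) * osc_div T (2 * PI * x * t)).
Proof.
  intros Hx Ht. assert (Hp := PI_RGT_0).
  unfold osc_integrand, osc_ln_div, osc_div.
  replace (2 * PI * t * x) with (2 * PI * x * t) by ring.
  rewrite (ln_mult (2 * PI * x) t) by nra. field. lra.
Qed.

Lemma osc_integrand_improper x v : 0 < x -> 0 < v ->
  filterlim (fun w => RInt (osc_integrand T x) v w) (Rbar_locally p_infty)
    (locally (osc_part x - RInt (osc_integrand T x) 1 v)).
Proof.
  intros Hx Hv. assert (Hp := PI_RGT_0).
  set (a := 2 * PI * x). set (b := 2 * euler_gamma - ln a).
  assert (Ha : 0 < a) by (unfold a; nra).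
  set (Fb := fun s => osc_ln_div T s + b * osc_div T s).
  assert (Fb_cont : forall t, 0 < t -> continuous Fb t).
  { intros t Ht. apply (continuous_plus (osc_ln_div T) (fun s => b * osc_div T s)).
    - now apply osc_ln_div_continuous.
    - apply (continuous_mult (fun _ => b) (osc_div T)); [apply continuous_const|].
      now apply osc_div_continuous. }
  assert (Subst : forall y z, 0 < y -> 0 < z ->
            RInt (osc_integrand T x) y z = RInt Fb (a * y) (a * z)).
  { intros y z Hy Hz. rewrite <- RInt_scale by auto. apply RInt_ext. intros t Ht.
    assert (0 < Rmin y z) by (apply Rmin_glb_lt; auto).
    apply osc_integrand_scale; lra. }
  replace (osc_part x - RInt (osc_integrand T x) 1 v)
    with (RInt Fb (a * v) 3 + (Il + b * I)).
  2:{ rewrite Subst, Rmult_1_r by lra. unfold osc_part. fold a b.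
      assert (Ch : RInt Fb a (a * v) + RInt Fb (a * v) 3
                   = RInt (osc_ln_div T) a 3 + b * RInt (osc_div T) a 3).
      { rewrite RInt_Chasles_pos by (auto; nra). apply RInt_osc_comb; lra. }
      lra. }
  apply (filterlim_ext_loc (fun w => RInt Fb (a * v) 3 + RInt Fb 3 (a * w))).
  - exists 0. intros w Hw. rewrite Subst by auto. apply RInt_Chasles_pos; auto; nra.
  - apply (filterlim_Rplus _ (fun _ => _)); [apply filterlim_const|].
    apply (filterlim_comp _ _ _ (fun w => a * w) (fun W => RInt Fb 3 W) _ (Rbar_locally p_infty)).
    + now apply filterlim_Rmult_l_p_infty.
    + apply (filterlim_ext_loc (fun W => RInt (osc_ln_div T) 3 W + b * RInt (osc_div T) 3 W)).
      * exists 3. intros W HW. unfold Fb. rewrite RInt_osc_comb by lra. reflexivity.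
      * apply (filterlim_Rplus _ _ (fun W => b * _)); [apply RInt_osc_ln_div_limit|].
        apply (filterlim_Rmult _ (fun _ => b)); [apply filterlim_const | apply RInt_osc_div_limit].
Qed.

Lemma osc_part_corrected_in_F_real :
  in_F_real (fun x => osc_part x - osc_correction osc_const x).
Proof.
  split; [|split].
  - intros x Hx. apply (continuous_minus osc_part (osc_correction osc_const)).
    + now apply osc_part_continuous.
    + unfold osc_correction. continuity_by_derive; now apply Rinv_0_lt_compat.
  - apply osc_part_corrected_limit_0.
  - exists 0.
    apply (filterlim_mult_inv_at_right_0 (fun x => osc_part x - osc_correction osc_const x)).
    apply (filterlim_ext (fun y => / y * osc_part y - / y * osc_correction osc_const y));
      [intros; ring|].
    replace (locally 0) with (locally (0 - 0)) by (f_equal; ring).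
    apply (filterlim_Rminus (Rbar_locally p_infty));
      [apply osc_part_growth | apply osc_correction_growth].
Qed.

End Oscillatory.

Lemma osc_constants_exist (T P : R -> R) :
  (forall t, is_derive P t (T t)) -> (forall t, continuous T t) ->
  (forall t, Rabs (P t) <= 1) -> (forall s, 0 < s <= 1 -> Rabs (T s - T 0) <= s) ->
  exists I Il Q P0 : R,
    (forall u, 3 <= u -> Rabs (I - RInt (osc_div T) 3 u) <= 2 / u) /\
    (forall u, 3 <= u -> Rabs (Il - RInt (osc_ln_div T) 3 u) <= 2 * (ln u / u)) /\
    (forall a, 0 < a <= 1 -> Rabs (Q - RInt (osc_reg_div T) a 1) <= a) /\
    filterlim (fun a => RInt (osc_reg_ln_div T) a 1) (at_right 0) (locally P0).
Proof.
  intros HP HT HPb HT0.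
  destruct (osc_div_tail T P HP HT HPb) as [I HI].
  destruct (osc_ln_div_tail T P HP HT HPb) as [Il HIl].
  destruct (osc_reg_div_head T HT HT0) as [Q HQ].
  destruct (osc_reg_ln_div_head T HT HT0) as [P0 HP0].
  now exists I, Il, Q, P0.
Qed.

(** * Dirichlet kernels and the constants [pi / 2] and [- gamma] *)

Fixpoint sum1n (f : nat -> R) (n : nat) : R :=
  match n with O => 0 | S p => sum1n f p + f (S p) end.

Lemma sum1n_ext f g n : (forall k, (1 <= k <= n)%nat -> f k = g k) -> sum1n f n = sum1n g n.
Proof.
  induction n as [|n IH]; intros H; simpl; auto.
  rewrite IH, H; [reflexivity | lia | intros; apply H; lia].
Qed.

Lemma sum1n_minus f g n : sum1n (fun k => f k - g k) n = sum1n f n - sum1n g n.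
Proof. induction n as [|n IH]; simpl; [ring | rewrite IH; ring]. Qed.

Lemma sum1n_0 n : sum1n (fun _ => 0) n = 0.
Proof. induction n as [|n IH]; simpl; [|rewrite IH]; ring. Qed.

Lemma Rabs_sum1n_le (f : nat -> R) n c : (forall k, (1 <= k <= n)%nat -> Rabs (f k) <= c) ->
  Rabs (sum1n f n) <= INR n * c.
Proof.
  induction n as [|n IH]; intros H.
  - simpl. rewrite Rabs_R0. lra.
  - cbn [sum1n]. rewrite S_INR. eapply Rle_trans; [apply Rabs_triang|].
    assert (Rabs (sum1n f n) <= INR n * c) by (apply IH; intros; apply H; lia).
    assert (Rabs (f (S n)) <= c) by (apply H; lia). lra.
Qed.

Lemma is_derive_sum1n (f df : nat -> R -> R) n u :
  (forall k, (1 <= k)%nat -> is_derive (f k) u (df k u)) ->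
  is_derive (fun x => sum1n (fun k => f k x) n) u (sum1n (fun k => df k u) n).
Proof.
  intros H. induction n as [|n IH]; simpl.
  - apply (is_derive_const (K := R_AbsRing) (V := R_NormedModule) 0).
  - apply (is_derive_plus (K := R_AbsRing) (V := R_NormedModule)
             (fun x => sum1n (fun k => f k x) n) (f (S n))); auto.
    apply H; lia.
Qed.

Lemma continuous_sum1n (f : nat -> R -> R) n u :
  (forall k, (1 <= k)%nat -> continuous (f k) u) ->
  continuous (fun x => sum1n (fun k => f k x) n) u.
Proof.
  intros H. induction n as [|n IH]; simpl.
  - apply continuous_const.
  - apply (continuous_plus (fun x => sum1n (fun k => f k x) n) (f (S n))); auto.
    apply H; lia.
Qed.

Lemma sin_INR_PI k : sin (INR k * PI) = 0.
Proof.
  induction k as [|k IH]; [simpl; rewrite Rmult_0_l; apply sin_0|].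
  rewrite S_INR, Rmult_plus_distr_r, Rmult_1_l, neg_sin, IH. ring.
Qed.

Lemma cos_INR_PI k : cos (INR k * PI) = (-1) ^ k.
Proof.
  induction k as [|k IH]; [simpl; rewrite Rmult_0_l; apply cos_0|].
  rewrite S_INR, Rmult_plus_distr_r, Rmult_1_l, neg_cos, IH. simpl. ring.
Qed.

Lemma dirichlet_sin_sum n u :
  2 * sin (u / 2) * sum1n (fun k => sin (INR k * u)) n = cos (u / 2) - cos ((INR n + / 2) * u).
Proof.
  induction n as [|n IH].
  - simpl. replace ((0 + / 2) * u) with (u / 2) by field. ring.
  - cbn [sum1n]. rewrite Rmult_plus_distr_l, IH.
    replace ((INR (S n) + / 2) * u) with (INR (S n) * u + u / 2) by (rewrite S_INR; field).
    replace ((INR n + / 2) * u) with (INR (S n) * u - u / 2) by (rewrite S_INR; field).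
    rewrite cos_plus, cos_minus. ring.
Qed.

Lemma dirichlet_cos_sum n u :
  2 * sin (u / 2) * (/ 2 + sum1n (fun k => cos (INR k * u)) n) = sin ((INR n + / 2) * u).
Proof.
  induction n as [|n IH].
  - simpl. replace ((0 + / 2) * u) with (u / 2) by field. field.
  - cbn [sum1n].
    replace (2 * sin (u / 2) * (/ 2 + (sum1n (fun k => cos (INR k * u)) n + cos (INR (S n) * u))))
      with (2 * sin (u / 2) * (/ 2 + sum1n (fun k => cos (INR k * u)) n)
            + 2 * sin (u / 2) * cos (INR (S n) * u)) by ring.
    rewrite IH.
    replace ((INR (S n) + / 2) * u) with (INR (S n) * u + u / 2) by (rewrite S_INR; field).
    replace ((INR n + / 2) * u) with (INR (S n) * u - u / 2) by (rewrite S_INR; field).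
    rewrite sin_plus, sin_minus. ring.
Qed.

Definition harmonic (n : nat) : R := sum1n (fun k => / INR k) n.

Lemma sum_odd_inv_harmonic m :
  sum1n (fun k => (1 - (-1) ^ k) / INR k) (2 * m) = 2 * harmonic (2 * m) - harmonic m.
Proof.
  unfold harmonic. induction m as [|m IH]; [simpl; ring|].
  replace (2 * S m)%nat with (S (S (2 * m))) by lia.
  cbn [sum1n]. rewrite IH.
  assert (E : (-1) ^ (2 * m) = 1) by apply pow_1_even.
  change ((-1) ^ S (2 * m)) with (-1 * (-1) ^ (2 * m)).
  change ((-1) ^ S (S (2 * m))) with (-1 * (-1 * (-1) ^ (2 * m))).
  rewrite E.
  replace (INR (S (S (2 * m)))) with (2 * INR (S m)) by (rewrite !S_INR, mult_INR; simpl; ring).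
  replace (INR (S (2 * m))) with (2 * INR m + 1) by (rewrite S_INR, mult_INR; simpl; ring).
  rewrite S_INR. assert (0 <= INR m) by apply pos_INR. field. lra.
Qed.

Lemma ln_le_harmonic n : ln (INR n + 1) <= harmonic n.
Proof.
  unfold harmonic. induction n as [|n IH].
  - simpl. rewrite Rplus_0_l, ln_1. lra.
  - cbn [sum1n]. rewrite S_INR. assert (0 <= INR n) by apply pos_INR.
    assert (K : ln ((INR n + 1 + 1) / (INR n + 1)) <= (INR n + 1 + 1) / (INR n + 1) - 1)
      by (apply ln_le_sub_1; apply Rdiv_lt_0_compat; lra).
    rewrite ln_div in K by lra.
    replace ((INR n + 1 + 1) / (INR n + 1) - 1) with (/ (INR n + 1)) in K by (field; lra).
    lra.
Qed.

Lemma harmonic_sub_ln_limit :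
  is_lim_seq (fun n => harmonic (S n) - ln (INR (S n))) euler_gamma.
Proof.
  set (u := fun n => sum_f_R0 (fun k => / INR (S k)) n - ln (INR (S n))).
  assert (Hu : forall n, u n = harmonic (S n) - ln (INR (S n))).
  { intros n. unfold u, harmonic. f_equal.
    induction n as [|n IH]; cbn [sum_f_R0 sum1n]; [ring|].
    rewrite IH. reflexivity. }
  assert (Ex : ex_finite_lim_seq u).
  { apply (ex_finite_lim_seq_decr u 0); intros n; rewrite !Hu.
    - unfold harmonic. cbn [sum1n]. rewrite (S_INR (S n)), S_INR.
      assert (0 <= INR n) by apply pos_INR.
      assert (K : ln ((INR n + 1) / (INR n + 1 + 1)) <= (INR n + 1) / (INR n + 1 + 1) - 1)
        by (apply ln_le_sub_1; apply Rdiv_lt_0_compat; lra).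
      rewrite ln_div in K by lra.
      replace ((INR n + 1) / (INR n + 1 + 1) - 1) with (- / (INR n + 1 + 1)) in K
        by (field; lra).
      lra.
    - generalize (ln_le_harmonic (S n)). intros K.
      assert (ln (INR (S n)) <= ln (INR (S n) + 1)).
      { apply ln_le; [rewrite S_INR; generalize (pos_INR n)|]; lra. }
      lra. }
  destruct Ex as [l Hl].
  replace euler_gamma with l.
  - apply (is_lim_seq_ext u); auto.
  - unfold euler_gamma. fold u. now rewrite (is_lim_seq_unique u l Hl).
Qed.

Lemma sin_half_bounds u : 0 < u <= PI -> u / 2 / 3 <= sin (u / 2) <= u / 2.
Proof.
  intros Hu. generalize PI_bounds; intros.
  assert (A := sin_ge_cubic (u / 2) ltac:(lra)).
  assert (B := sin_le_self (u / 2) ltac:(lra)).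
  set (v := u / 2) in *. assert (0 < v <= 2) by (unfold v; lra).
  assert (v ^ 3 / 6 <= (2 / 3) * v) by (simpl; nra).
  lra.
Qed.

(* [1 / (2 sin (u/2))] is the Dirichlet-kernel denominator; subtracting [1/u] leaves a
   function that stays bounded, with bounded derivative, on ]0, PI]. *)
Definition csc_corr (u : R) : R := / (2 * sin (u / 2)) - / u.
Definition csc_corr' (u : R) : R := - cos (u / 2) / (4 * sin (u / 2) ^ 2) + / u ^ 2.

Lemma Rabs_csc_corr_le u : 0 < u <= PI -> Rabs (csc_corr u) <= / 2.
Proof.
  intros Hu. generalize (sin_ge_cubic (u / 2)) (sin_half_bounds u Hu) PI_bounds. intros C [A B] P.
  specialize (C ltac:(lra)).
  unfold csc_corr. set (s := sin (u / 2)) in *.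
  replace (/ (2 * s) - / u) with ((u / 2 - s) / (u * s)) by (field; lra).
  apply Rabs_div_le; [nra|].
  set (v := u / 2) in *. replace u with (2 * v) by (unfold v; field).
  assert (0 < v <= 2) by (unfold v; lra).
  rewrite Rabs_pos_eq by lra.
  assert (v ^ 3 / 6 <= v * (v / 3)) by (simpl; nra).
  assert (v * (v / 3) <= v * s) by (apply Rmult_le_compat_l; lra).
  lra.
Qed.

Lemma Rabs_csc_corr'_le u : 0 < u <= PI -> Rabs (csc_corr' u) <= 9 / 8.
Proof.
  intros Hu. generalize (sin_ge_cubic (u / 2)) (sin_half_bounds u Hu) PI_bounds.
  intros Sg [A B] P. specialize (Sg ltac:(lra)).
  destruct (cos_bounds_quartic (u / 2) ltac:(lra)) as [Cg Cl].
  unfold csc_corr'. set (s := sin (u / 2)) in *. set (c := cos (u / 2)) in *.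
  set (v := u / 2) in *. replace u with (2 * v) by (unfold v; field).
  assert (0 < v <= 2) by (unfold v; lra).
  replace (- c / (4 * s ^ 2) + / (2 * v) ^ 2) with ((s ^ 2 - v ^ 2 * c) / (4 * v ^ 2 * s ^ 2))
    by (field; lra).
  apply Rabs_div_le; [assert (0 < v ^ 2) by nra; assert (0 < s ^ 2) by nra; nra|].
  assert (U : s ^ 2 - v ^ 2 * c <= v ^ 4 / 2).
  { assert (s ^ 2 <= v ^ 2) by nra.
    assert (v ^ 2 * (1 - v ^ 2 / 2) <= v ^ 2 * c) by (apply Rmult_le_compat_l; nra). nra. }
  assert (Lo : 0 <= s ^ 2 - v ^ 2 * c).
  { assert (0 <= v - v ^ 3 / 6) by (simpl; nra).
    assert ((v - v ^ 3 / 6) ^ 2 <= s ^ 2) by (apply pow_incr; lra).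
    assert (v ^ 2 * c <= v ^ 2 * (1 - v ^ 2 / 2 + v ^ 4 / 24)) by (apply Rmult_le_compat_l; nra).
    assert (v ^ 4 / 6 - v ^ 6 / 72 >= 0).
    { replace (v ^ 4 / 6 - v ^ 6 / 72) with (v ^ 4 * (1 / 6 - v ^ 2 / 72)) by field.
      assert (0 <= v ^ 4) by (apply pow_le; lra). assert (v ^ 2 <= 4) by nra. nra. }
    replace ((v - v ^ 3 / 6) ^ 2) with (v ^ 2 - v ^ 4 / 3 + v ^ 6 / 36) in * by field.
    nra. }
  rewrite Rabs_pos_eq by lra.
  assert (v ^ 2 / 9 <= s ^ 2)
    by (replace (v ^ 2 / 9) with ((v / 3) ^ 2) by field; apply pow_incr; lra).
  assert (v ^ 4 / 2 <= 9 / 8 * (4 * v ^ 2 * (v ^ 2 / 9))) by (simpl; nra).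
  assert (4 * v ^ 2 * (v ^ 2 / 9) <= 4 * v ^ 2 * s ^ 2) by (apply Rmult_le_compat_l; nra).
  nra.
Qed.

Lemma is_derive_csc_corr u : 0 < u <= PI -> is_derive csc_corr u (csc_corr' u).
Proof.
  intros Hu. destruct (sin_half_bounds u Hu).
  unfold csc_corr, csc_corr'. auto_derive; [solve_side|]. unfold Rdiv. field. solve_side.
Qed.

Lemma continuous_csc_corr' u : 0 < u <= PI -> continuous csc_corr' u.
Proof. intros Hu. destruct (sin_half_bounds u Hu). unfold csc_corr'. continuity_by_derive. Qed.

Lemma Rabs_RInt_osc_csc_corr_le (T P : R -> R) N eps :
  (forall t, is_derive P t (T t)) -> (forall t, continuous T t) -> (forall t, Rabs (P t) <= 1) ->
  0 < N -> 0 < eps <= PI ->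
  Rabs (RInt (fun u => T (N * u) * csc_corr u) eps PI) <= 6 / N.
Proof.
  intros HP HT HPb HN He. generalize PI_bounds; intros.
  set (G := fun u => / N * P (N * u)).
  assert (HG : forall u, is_derive G u (T (N * u))).
  { intros u. unfold G. auto_derive; [now exists (T (N * u))|].
    replace (Derive (fun x : R => P x) (N * u)) with (T (N * u))
      by (symmetry; apply is_derive_unique, HP).
    field. lra. }
  assert (HGb : forall u, Rabs (G u) <= / N).
  { intros u. unfold G. rewrite Rabs_mult, Rabs_inv, (Rabs_pos_eq N) by lra.
    assert (0 < / N) by (apply Rinv_0_lt_compat; lra).
    generalize (HPb (N * u)); nra. }
  assert (Hparts : forall t, eps <= t <= PI ->
            is_derive G t (T (N * t)) /\ is_derive csc_corr t (csc_corr' t) /\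
            continuous (fun u => T (N * u)) t /\ continuous csc_corr' t).
  { intros t Ht. split; [|split; [|split]].
    - apply HG.
    - apply is_derive_csc_corr; lra.
    - apply (continuous_comp (fun u => N * u) T); [continuity_by_derive | apply HT].
    - apply continuous_csc_corr'; lra. }
  rewrite (RInt_by_parts G (fun u => T (N * u)) csc_corr csc_corr' eps PI) by (lra || exact Hparts).
  assert (Ex : ex_RInt (fun s => G s * csc_corr' s) eps PI).
  { apply ex_RInt_continuous_le; try lra. intros t Ht.
    apply (continuous_mult G csc_corr'); [apply (is_derive_continuous G t _ (HG t))|].
    apply continuous_csc_corr'; lra. }
  assert (B1 : Rabs (RInt (fun s => G s * csc_corr' s) eps PI) <= (PI - eps) * (/ N * (9 / 8))).
  { apply abs_RInt_le_const; auto; [lra|]. intros t Ht. rewrite Rabs_mult.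
    apply Rmult_le_compat; try apply Rabs_pos; auto. apply Rabs_csc_corr'_le; lra. }
  assert (Bend : forall u, eps <= u <= PI -> Rabs (G u * csc_corr u) <= / N * / 2).
  { intros u Hu. rewrite Rabs_mult.
    apply Rmult_le_compat; try apply Rabs_pos; auto. apply Rabs_csc_corr_le; lra. }
  generalize (Bend PI ltac:(lra)) (Bend eps ltac:(lra)). intros B2 B3.
  assert (0 < / N) by (apply Rinv_0_lt_compat; lra).
  assert ((PI - eps) * (/ N * (9 / 8)) <= 4 * (/ N * (9 / 8))) by (apply Rmult_le_compat_r; lra).
  replace (6 / N) with (6 * / N) by (unfold Rdiv; ring).
  eapply Rle_trans; [apply Rabs_triang|].
  eapply Rle_trans; [apply Rplus_le_compat_r; unfold Rminus; apply Rabs_triang|].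
  rewrite !Rabs_Ropp. lra.
Qed.

Lemma continuous_osc_csc_corr (T : R -> R) N t : (forall t, continuous T t) ->
  0 < t <= PI -> continuous (fun u => T (N * u) * csc_corr u) t.
Proof.
  intros HT Ht. apply (continuous_mult (fun u => T (N * u)) csc_corr).
  - apply (continuous_comp (fun u => N * u) T); [continuity_by_derive | apply HT].
  - apply (is_derive_continuous csc_corr t (csc_corr' t)), is_derive_csc_corr, Ht.
Qed.

Lemma RInt_half_add_sum_cos n eps : eps <= PI ->
  RInt (fun u => / 2 + sum1n (fun k => cos (INR k * u)) n) eps PI
  = PI / 2 - eps / 2 - sum1n (fun k => sin (INR k * eps) / INR k) n.
Proof.
  intros He.
  rewrite (RInt_FTC (fun u => u / 2 + sum1n (fun k => sin (INR k * u) / INR k) n)); [|lra|].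
  - rewrite (sum1n_ext _ (fun _ => 0) n), sum1n_0; [change_eq_R; ring|].
    intros k _. rewrite sin_INR_PI. unfold Rdiv; ring.
  - intros t Ht. split.
    + apply (is_derive_plus (K := R_AbsRing) (V := R_NormedModule) (fun u => u / 2));
        [auto_derive; auto; field|].
      apply (is_derive_sum1n (fun k u => sin (INR k * u) / INR k) (fun k u => cos (INR k * u))).
      intros k Hk. assert (0 < INR k) by (apply lt_0_INR; lia).
      auto_derive; [lra | field; lra].
    + apply (continuous_plus (fun _ => / 2) (fun u => sum1n (fun k => cos (INR k * u)) n));
        [apply continuous_const|].
      apply continuous_sum1n. intros; continuity_by_derive.
Qed.

Lemma RInt_sum_sin n eps : eps <= PI ->
  RInt (fun u => sum1n (fun k => sin (INR k * u)) n) eps PI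
  = sum1n (fun k => (cos (INR k * eps) - cos (INR k * PI)) / INR k) n.
Proof.
  intros He.
  rewrite (RInt_FTC (fun u => sum1n (fun k => - cos (INR k * u) / INR k) n)); [|lra|].
  - rewrite <- sum1n_minus. apply sum1n_ext. intros k _. unfold Rdiv; ring.
  - intros t Ht. split; [|apply continuous_sum1n; intros; continuity_by_derive].
    apply (is_derive_sum1n (fun k u => - cos (INR k * u) / INR k) (fun k u => sin (INR k * u))).
    intros k Hk. assert (0 < INR k) by (apply lt_0_INR; lia).
    auto_derive; [lra | field; lra].
Qed.

Lemma RInt_half_cot eps : 0 < eps <= PI ->
  RInt (fun u => cos (u / 2) / (2 * sin (u / 2))) eps PI = - ln (sin (eps / 2)).
Proof.
  intros He. rewrite (RInt_FTC (fun u => ln (sin (u / 2)))); [|lra|].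
  - rewrite sin_PI2, ln_1. change_eq_R. ring.
  - intros t Ht. destruct (sin_half_bounds t ltac:(lra)). split.
    + auto_derive; [lra|]. unfold Rdiv. field. lra.
    + continuity_by_derive.
Qed.

Lemma RInt_osc_div_dirichlet_sin n eps : 0 < eps <= PI ->
  let N := INR n + / 2 in
  RInt (osc_div sin) (N * eps) (N * PI)
  = PI / 2 - eps / 2 - sum1n (fun k => sin (INR k * eps) / INR k) n
    - RInt (fun u => sin (N * u) * csc_corr u) eps PI.
Proof.
  intros He N. generalize PI_bounds (pos_INR n); intros.
  assert (HN : 0 < N) by (unfold N; lra).
  rewrite <- RInt_half_add_sum_cos by lra.
  rewrite (RInt_ext (fun u => / 2 + sum1n (fun k => cos (INR k * u)) n)
             (fun u => N * osc_div sin (N * u) + sin (N * u) * csc_corr u)).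
  - rewrite (RInt_plus (V := R_CompleteNormedModule)).
    + rewrite (RInt_scale (osc_div sin) N eps PI)
        by (try lra; apply osc_div_continuous, continuous_sin).
      unfold plus; simpl. lra.
    + apply ex_RInt_pos; try lra. intros; unfold osc_div; continuity_by_derive.
    + apply ex_RInt_continuous_le; [lra|]. intros t Ht.
      apply continuous_osc_csc_corr; [apply continuous_sin | lra].
  - rewrite Rmin_left, Rmax_right by lra. intros u Hu.
    destruct (sin_half_bounds u ltac:(lra)). unfold osc_div, csc_corr.
    apply (Rmult_eq_reg_l (2 * sin (u / 2))); [|solve_side].
    rewrite dirichlet_cos_sum. fold N. field. solve_side.
Qed.

Lemma RInt_osc_div_dirichlet_cos n eps : 0 < eps <= PI ->
  let N := INR n + / 2 in
  RInt (osc_div cos) (N * eps) (N * PI)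
  = - ln (sin (eps / 2)) - sum1n (fun k => (cos (INR k * eps) - cos (INR k * PI)) / INR k) n
    - RInt (fun u => cos (N * u) * csc_corr u) eps PI.
Proof.
  intros He N. generalize PI_bounds (pos_INR n); intros.
  assert (HN : 0 < N) by (unfold N; lra).
  set (cot2 := fun u => cos (u / 2) / (2 * sin (u / 2))).
  assert (Ccot : forall t, eps <= t <= PI -> continuous cot2 t).
  { intros t Ht. destruct (sin_half_bounds t ltac:(lra)). unfold cot2. continuity_by_derive. }
  rewrite <- RInt_half_cot, <- RInt_sum_sin by lra. fold cot2.
  rewrite (RInt_ext (fun u => sum1n (fun k => sin (INR k * u)) n)
             (fun u => (cot2 u - N * osc_div cos (N * u)) - cos (N * u) * csc_corr u)).
  - rewrite (RInt_minus (V := R_CompleteNormedModule)), (RInt_minus (V := R_CompleteNormedModule)).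
    + rewrite (RInt_scale (osc_div cos) N eps PI)
        by (try lra; apply osc_div_continuous, continuous_cos).
      unfold minus, plus, opp; simpl. lra.
    + apply ex_RInt_continuous_le; [lra | auto].
    + apply ex_RInt_pos; try lra. intros; unfold osc_div; continuity_by_derive.
    + apply ex_RInt_continuous_le; [lra|]. intros t Ht.
      apply (continuous_minus cot2 (fun u => N * osc_div cos (N * u))); auto.
      unfold osc_div; continuity_by_derive.
    + apply ex_RInt_continuous_le; [lra|]. intros t Ht.
      apply continuous_osc_csc_corr; [apply continuous_cos | lra].
  - rewrite Rmin_left, Rmax_right by lra. intros u Hu.
    destruct (sin_half_bounds u ltac:(lra)). unfold cot2, osc_div, csc_corr.
    apply (Rmult_eq_reg_l (2 * sin (u / 2))); [|solve_side].
    rewrite dirichlet_sin_sum. fold N. field. solve_side.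
Qed.

Lemma eq_0_of_Rabs_le_vanishing d (u : nat -> R) :
  (forall m, Rabs d <= u m) -> is_lim_seq u 0 -> d = 0.
Proof.
  intros H Hu.
  assert (Hle : Rbar_le (Rabs d) 0)
    by (apply (is_lim_seq_le (fun _ => Rabs d) u); auto; apply is_lim_seq_const).
  simpl in Hle. destruct (Req_dec d 0) as [|Hd]; auto.
  apply Rabs_pos_lt in Hd. lra.
Qed.

Lemma is_lim_seq_div_succ c : is_lim_seq (fun m => c / (INR m + 1)) 0.
Proof.
  replace (Finite 0) with (Rbar_mult c (Rbar_inv p_infty)) by (simpl; f_equal; ring).
  apply is_lim_seq_scal_l, (is_lim_seq_inv (fun m => INR m + 1)); [|discriminate].
  apply (is_lim_seq_ext (fun m => INR (S m))); [intros; apply S_INR|].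
  apply (is_lim_seq_incr_1 INR p_infty), is_lim_seq_INR.
Qed.

Lemma dirichlet_params n : (1 <= n)%nat ->
  let N := INR n + / 2 in let eps := / (N * N) in
  INR n <= N /\ 3 / 2 <= N /\ 0 < eps <= / N /\ N * eps = / N /\ / N <= 1 /\
  eps <= PI /\ 3 <= N * PI /\ 2 / (N * PI) <= / N.
Proof.
  intros Hn N eps. generalize PI_bounds; intros.
  assert (1 <= INR n) by (apply (le_INR 1); lia).
  assert (HN : 3 / 2 <= N) by (unfold N; lra).
  assert (0 < / N) by (apply Rinv_0_lt_compat; lra).
  assert (/ N <= 1) by (rewrite <- Rinv_1; apply Rinv_le_contravar; lra).
  assert (E : eps = / N * / N) by (unfold eps; field; lra).
  assert (/ N * / N <= / N * 1) by (apply Rmult_le_compat_l; lra).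
  assert (2 / (N * PI) <= / N).
  { unfold Rdiv. rewrite Rinv_mult. generalize (Rinv_le_contravar 3 PI ltac:(lra) ltac:(lra)).
    nra. }
  rewrite E. repeat split; try (unfold N; lra); try nra.
  field. lra.
Qed.

Lemma Rabs_sum_sin_div_le n eps : 0 <= eps ->
  Rabs (sum1n (fun k => sin (INR k * eps) / INR k) n) <= INR n * eps.
Proof.
  intros He. apply Rabs_sum1n_le. intros k Hk.
  assert (0 < INR k) by (apply lt_0_INR; lia).
  apply Rabs_div_le; [lra|]. rewrite Rmult_comm. apply Rabs_sin_le_self. nra.
Qed.

Lemma Rabs_sum_1_sub_cos_div_le n eps : 0 <= eps -> INR n * eps <= 1 ->
  Rabs (sum1n (fun k => (1 - cos (INR k * eps)) / INR k) n) <= (INR n * eps) ^ 2 / 2.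
Proof.
  intros He Hn.
  replace ((INR n * eps) ^ 2 / 2) with (INR n * (INR n * eps ^ 2 / 2)) by field.
  apply Rabs_sum1n_le. intros k Hk.
  assert (0 < INR k) by (apply lt_0_INR; lia).
  assert (INR k <= INR n) by (apply le_INR; lia).
  apply Rabs_div_le; [lra|]. rewrite Rabs_minus_sym.
  eapply Rle_trans; [apply Rabs_cos_sub_1_le; split; nra|].
  assert (0 <= eps ^ 2) by nra.
  replace ((INR k * eps) ^ 2 / 2) with (INR k * eps ^ 2 / 2 * INR k) by field.
  apply Rmult_le_compat_r; [lra|]. nra.
Qed.

Lemma ln_sub_ln_sin_le z : 0 < z <= 1 -> Rabs (ln z - ln (sin z)) <= z.
Proof.
  intros Hz. assert (P := PI_bounds).
  generalize (sin_le_self z ltac:(lra)) (sin_ge_cubic z ltac:(lra)). intros U L.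
  assert (Sz : z / 3 <= sin z) by (simpl in L; nra).
  assert (0 <= ln z - ln (sin z)) by (assert (ln (sin z) <= ln z) by (apply ln_le; lra); lra).
  rewrite Rabs_pos_eq by lra.
  assert (K : ln (z / sin z) <= z / sin z - 1) by (apply ln_le_sub_1, Rdiv_lt_0_compat; lra).
  rewrite ln_div in K by lra.
  replace (z / sin z - 1) with ((z - sin z) / sin z) in K by (field; lra).
  enough ((z - sin z) / sin z <= z) by lra.
  apply (Rmult_le_reg_r (sin z)); [lra|]. unfold Rdiv. rewrite Rmult_assoc, Rinv_l by lra.
  assert (z * (z / 3) <= z * sin z) by (apply Rmult_le_compat_l; lra). simpl in L. nra.
Qed.

Lemma ln_4y_add_1_approx y : 0 < y -> Rabs (ln (4 * y + 1) - 2 * ln (2 * y) + ln y) <= / (4 * y).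
Proof.
  intros Hy.
  replace (ln (4 * y + 1) - 2 * ln (2 * y) + ln y) with (ln ((4 * y + 1) / (4 * y))).
  2:{ rewrite ln_div, (ln_mult 4 y), (ln_mult 2 y) by lra.
      replace 4 with (2 * 2) by ring. rewrite ln_mult by lra. ring. }
  assert (0 <= ln ((4 * y + 1) / (4 * y))).
  { rewrite <- ln_1. apply ln_le; [lra|].
    apply (Rmult_le_reg_r (4 * y)); [lra|]. unfold Rdiv.
    rewrite Rmult_assoc, Rinv_l by lra. lra. }
  rewrite Rabs_pos_eq by lra.
  eapply Rle_trans; [apply ln_le_sub_1, Rdiv_lt_0_compat; lra|].
  apply Req_le. field. lra.
Qed.

Lemma osc_const_sin I Q :
  (forall u, 3 <= u -> Rabs (I - RInt (osc_div sin) 3 u) <= 2 / u) ->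
  (forall a, 0 < a <= 1 -> Rabs (Q - RInt (osc_reg_div sin) a 1) <= a) ->
  osc_const sin I Q = PI / 2.
Proof.
  intros HI HQ. assert (HPI := PI_bounds).
  enough (osc_const sin I Q - PI / 2 = 0) by lra.
  apply (eq_0_of_Rabs_le_vanishing _ (fun m => 10 / (INR m + 1))); [|apply is_lim_seq_div_succ].
  intros m.
  destruct (dirichlet_params (S m) ltac:(lia))
    as (Hn & HN & [He He'] & HNe & HN1 & HePI & HNPI & HNPI').
  set (N := INR (S m) + / 2) in *. set (eps := / (N * N)) in *.
  generalize (osc_const_approx sin continuous_sin I Q HI HQ (N * eps) (N * PI)
                ltac:(lra) ltac:(lra)).
  generalize (RInt_osc_div_dirichlet_sin (S m) eps ltac:(lra)). cbv zeta. fold N.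
  intros ->. rewrite sin_0, Rmult_0_l, Rplus_0_r.
  generalize (Rabs_sum_sin_div_le (S m) eps ltac:(lra))
    (Rabs_RInt_osc_csc_corr_le sin (fun s => - cos s) N eps is_derive_opp_cos continuous_sin
       Rabs_opp_cos_le_1 ltac:(lra) ltac:(lra)).
  rewrite !Rabs_le_between. intros HS HR Happrox.
  assert (Hm : INR m + 1 <= N) by (unfold N; rewrite S_INR; lra).
  assert (0 <= INR m) by apply pos_INR.
  assert (0 < / N) by (apply Rinv_0_lt_compat; lra).
  assert (INR (S m) * eps <= / N) by (rewrite <- HNe; apply Rmult_le_compat_r; lra).
  assert (10 / N <= 10 / (INR m + 1))
    by (unfold Rdiv; apply Rmult_le_compat_l; [lra | apply Rinv_le_contravar; lra]).
  unfold Rdiv in *. lra.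
Qed.

Definition gamma_seq (j : nat) : R := harmonic (S j) - ln (INR (S j)).

Lemma sum_cos_dirichlet_harmonic n eps :
  sum1n (fun k => (cos (INR k * eps) - cos (INR k * PI)) / INR k) (2 * n)
  = 2 * harmonic (2 * n) - harmonic n - sum1n (fun k => (1 - cos (INR k * eps)) / INR k) (2 * n).
Proof.
  rewrite <- sum_odd_inv_harmonic, <- sum1n_minus. apply sum1n_ext. intros k Hk.
  assert (0 < INR k) by (apply lt_0_INR; lia).
  rewrite cos_INR_PI. field. lra.
Qed.

(* With [n = 2 (m + 1)] terms, [sum_k (1 - (-1)^k) / k = 2 H_n - H_(m+1)] and
   [ln (2 N) = ln (4 (m + 1) + 1)] equals [2 ln (2 (m + 1)) - ln (m + 1)] up to [O(1/m)]. *)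
Lemma osc_const_cos_bound I Q m :
  (forall u, 3 <= u -> Rabs (I - RInt (osc_div cos) 3 u) <= 2 / u) ->
  (forall a, 0 < a <= 1 -> Rabs (Q - RInt (osc_reg_div cos) a 1) <= a) ->
  Rabs (osc_const cos I Q + euler_gamma) <= 11 / (INR m + 1)
    + 2 * Rabs (gamma_seq (2 * m + 1) - euler_gamma) + Rabs (gamma_seq m - euler_gamma).
Proof.
  intros HI HQ. assert (HPI := PI_bounds). assert (Hm0 := pos_INR m).
  destruct (dirichlet_params (2 * S m) ltac:(lia))
    as (Hn & HN & [He He'] & HNe & HN1 & HePI & HNPI & HNPI').
  set (N := INR (2 * S m) + / 2) in *. set (eps := / (N * N)) in *.
  set (y := INR (S m)).
  assert (Hy : INR (2 * S m) = 2 * y) by (unfold y; rewrite mult_INR; simpl; ring).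
  assert (Hy1 : y = INR m + 1) by (unfold y; apply S_INR).
  assert (HNy : N = 2 * y + / 2) by (unfold N; rewrite Hy; ring).
  assert (0 < / N) by (apply Rinv_0_lt_compat; lra).
  assert (Hne : INR (2 * S m) * eps <= / N) by (rewrite <- HNe; apply Rmult_le_compat_r; lra).
  generalize (osc_const_approx cos continuous_cos I Q HI HQ (N * eps) (N * PI)
                ltac:(lra) ltac:(lra)).
  generalize (RInt_osc_div_dirichlet_cos (2 * S m) eps ltac:(lra)). cbv zeta. fold N.
  intros ->. rewrite cos_0, Rmult_1_l, sum_cos_dirichlet_harmonic.
  replace (harmonic (2 * S m)) with (gamma_seq (2 * m + 1) + ln (2 * y))
    by (unfold gamma_seq; replace (S (2 * m + 1)) with (2 * S m)%nat by lia; rewrite Hy; ring).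
  replace (harmonic (S m)) with (gamma_seq m + ln y) by (unfold gamma_seq, y; ring).
  replace (ln (N * eps)) with (ln (4 * y + 1) + ln (eps / 2))
    by (rewrite <- ln_mult by lra; f_equal; rewrite HNy; field).
  generalize (ln_sub_ln_sin_le (eps / 2) ltac:(lra)) (ln_4y_add_1_approx y ltac:(lra))
    (Rabs_sum_1_sub_cos_div_le (2 * S m) eps ltac:(lra) ltac:(lra))
    (Rabs_RInt_osc_csc_corr_le cos sin N eps is_derive_sin continuous_cos Rabs_sin_le_1
       ltac:(lra) ltac:(lra)).
  rewrite !Rabs_le_between. intros Hz Hl HD HRL Happrox.
  assert (/ (4 * y) <= / N) by (apply Rinv_le_contravar; lra).
  assert ((INR (2 * S m) * eps) ^ 2 / 2 <= / N).
  { assert (0 <= INR (2 * S m) * eps) by (apply Rmult_le_pos; [apply pos_INR | lra]).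
    assert ((INR (2 * S m) * eps) * (INR (2 * S m) * eps) <= / N * 1)
      by (apply Rmult_le_compat; lra).
    unfold pow. rewrite Rmult_1_r. lra. }
  assert (11 / N <= 11 / (INR m + 1))
    by (unfold Rdiv; apply Rmult_le_compat_l; [lra | apply Rinv_le_contravar; lra]).
  generalize (Rabs_pos (gamma_seq (2 * m + 1) - euler_gamma)) (Rabs_pos (gamma_seq m - euler_gamma))
    (Rle_abs (gamma_seq (2 * m + 1) - euler_gamma)) (Rle_abs (gamma_seq m - euler_gamma))
    (Rabs_maj2 (gamma_seq (2 * m + 1) - euler_gamma)) (Rabs_maj2 (gamma_seq m - euler_gamma)).
  intros. unfold Rdiv in *. lra.
Qed.

Lemma is_lim_seq_Rabs_sub_0 u (l : R) : is_lim_seq u l -> is_lim_seq (fun n => Rabs (u n - l)) 0.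
Proof.
  intros Hu. replace (Finite 0) with (Rbar_abs (l - l))
    by (simpl; f_equal; rewrite Rminus_eq_0; apply Rabs_R0).
  apply is_lim_seq_abs, is_lim_seq_minus'; [exact Hu | apply is_lim_seq_const].
Qed.

Lemma osc_const_cos I Q :
  (forall u, 3 <= u -> Rabs (I - RInt (osc_div cos) 3 u) <= 2 / u) ->
  (forall a, 0 < a <= 1 -> Rabs (Q - RInt (osc_reg_div cos) a 1) <= a) ->
  osc_const cos I Q = - euler_gamma.
Proof.
  intros HI HQ.
  enough (osc_const cos I Q + euler_gamma = 0) by lra.
  apply (eq_0_of_Rabs_le_vanishing _ _ (fun m => osc_const_cos_bound I Q m HI HQ)).
  assert (G := is_lim_seq_Rabs_sub_0 _ _ harmonic_sub_ln_limit).
  replace (Finite 0) with (Finite (0 + 2 * 0 + 0)) by (f_equal; ring).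
  apply is_lim_seq_plus'; [apply is_lim_seq_plus'; [apply is_lim_seq_div_succ|] | exact G].
  apply (is_lim_seq_scal_l _ 2 0).
  apply (is_lim_seq_subseq (fun j => Rabs (gamma_seq j - euler_gamma)) 0 (fun m => 2 * m + 1)%nat);
    [|exact G].
  intros P [N HN]. exists N. intros m Hm. apply HN. lia.
Qed.

Lemma in_F_pair (h1 h2 : R -> R) :
  in_F_real h1 -> in_F_real h2 -> in_F (fun x => (h1 x, h2 x)).
Proof.
  intros [C1 [[a1 L1] [b1 B1]]] [C2 [[a2 L2] [b2 B2]]].
  split; [|split].
  - intros x Hx. apply (filterlim_C_pair (locally x)); [apply C1 | apply C2]; exact Hx.
  - exists (a1, a2). now apply (filterlim_C_pair (at_right 0)).
  - exists (b1, - b2).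
    apply (filterlim_ext (fun x => ((x * h1 (/ x), - (x * h2 (/ x))) : C))).
    { intros x. unfold Cmult, Cconj, RtoC; simpl. f_equal; ring. }
    apply (filterlim_C_pair (at_right 0)); [exact B1 | now apply filterlim_Ropp].
Qed.

Lemma cRInt_integrand x a b :
  cRInt (integrand x) a b = (RInt (osc_integrand cos x) a b, RInt (osc_integrand sin x) a b).
Proof.
  unfold cRInt. f_equal; apply RInt_ext; intros t _;
    unfold integrand, osc_integrand, cexpi, Cmult, RtoC; simpl; change_eq_R; ring.
Qed.

Lemma Rabs_cos_sub_cos_0_le s : 0 < s <= 1 -> Rabs (cos s - cos 0) <= s.
Proof. intros Hs. rewrite cos_0. generalize (Rabs_cos_sub_1_le s ltac:(lra)). nra. Qed.

Lemma Rabs_sin_sub_sin_0_le s : 0 < s <= 1 -> Rabs (sin s - sin 0) <= s.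
Proof. intros Hs. rewrite sin_0, Rminus_0_r. apply Rabs_sin_le_self. lra. Qed.

Theorem proposition10 :
  exists g : R -> C,
    in_F g /\
    forall x v : R, 0 < x -> 0 < v ->
      exists l : C,
        filterlim (fun w => cRInt (integrand x) v w) (Rbar_locally p_infty) (locally l) /\
        g x = Cminus (cRInt (integrand x) 1 v)
                (Cplus (Cplus (RtoC (/ 2 * (ln (/ x)) ^ 2))
                              (Cmult (euler_gamma - ln (2 * PI), PI / 2) (RtoC (ln (/ x)))))
                       (Copp l)).
Proof.
  destruct (osc_constants_exist cos sin is_derive_sin continuous_cos Rabs_sin_le_1
              Rabs_cos_sub_cos_0_le)
    as (Ic & Ilc & Qc & Pc & HIc & HIlc & HQc & HPc).
  destruct (osc_constants_exist sin (fun s => - cos s) is_derive_opp_cos continuous_sin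
              Rabs_opp_cos_le_1 Rabs_sin_sub_sin_0_le)
    as (Is & Ils & Qs & Ps & HIs & HIls & HQs & HPs).
  exists (fun x => (osc_part cos Ic Ilc x - osc_correction cos (osc_const cos Ic Qc) x,
                    osc_part sin Is Ils x - osc_correction sin (osc_const sin Is Qs) x)).
  split.
  - apply in_F_pair.
    + exact (osc_part_corrected_in_F_real cos continuous_cos Ic Ilc Qc Pc HIc HIlc HQc HPc).
    + exact (osc_part_corrected_in_F_real sin continuous_sin Is Ils Qs Ps HIs HIls HQs HPs).
  - intros x v Hx Hv.
    exists (osc_part cos Ic Ilc x - RInt (osc_integrand cos x) 1 v,
            osc_part sin Is Ils x - RInt (osc_integrand sin x) 1 v).
    split.
    + apply (filterlim_ext (fun w => ((RInt (osc_integrand cos x) v w,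
                                       RInt (osc_integrand sin x) v w) : C)));
        [intros w; symmetry; apply cRInt_integrand|].
      apply (filterlim_C_pair (Rbar_locally p_infty)).
      * exact (osc_integrand_improper cos continuous_cos Ic Ilc HIc HIlc x v Hx Hv).
      * exact (osc_integrand_improper sin continuous_sin Is Ils HIs HIls x v Hx Hv).
    + rewrite cRInt_integrand, osc_const_cos, osc_const_sin by auto.
      unfold osc_correction, Cminus, Cplus, Copp, Cmult, RtoC; cbn [fst snd].
      rewrite cos_0, sin_0. f_equal; change_eq_R; field.
Qed.
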